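(* Let $\Upsilon$ be a tree and let $\|\cdot\|$ be an equivalent strictly convex norm on $C_0(\Upsilon)$, with associated function $\mu(t)=\inf\{\|\mathbf{1}_{(0,t]}+f'\|: f'\in C_0(\Upsilon),\ \operatorname{supp}f'\subseteq(t,\infty)\}$. Then for every $s\in\Upsilon$ there is at most one point $t$ which is bad for $\mu$ and satisfies $s\preceq t$ and $\mu(t)=\mu(s)$. In particular, $\mu$ is strictly increasing on the set of its bad points.
   Context: A tree is a partially ordered set $(\Upsilon,\preceq)$ such that for each $t$ the set $(0,t]=\{s:s\preceq t\}$ is well-ordered; write $(0,t)=\{s:s\prec t\}$, $(t,\infty)=\{u:t\prec u\}$, and let $r(t)$ be the order type of $(0,t)$. Trees are assumed Hausdorff: if $r(t)$ is a limit ordinal and $(0,t)=(0,t')$ then $t=t'$. $\Upsilon$ carries the coarsest topology in which every $(0,t]$ is open and closed, and $C_0(\Upsilon)$ is the space of continuous $f:\Upsilon\to\mathbb{R}$ with $\{|f|\ge\epsilon\}$ compact for every $\epsilon>0$, with the supremum norm; $\operatorname{supp}f=\{s:f(s)\ne0\}$. The set $t^+$ of immediate successors of $t$ consists of those $u$ with $(0,u)=(0,t]$. The function $\mu$ is increasing. For increasing $\rho$, $t$ is good for $\rho$ if there is a finite $F\subseteq t^+$ with $\inf_{u\in t^+\setminus F}\rho(u)>\rho(t)$ (infimum over the empty set $=+\infty$); otherwise bad. A norm is strictly convex if $\|x\|=\|y\|=\tfrac12\|x+y\|$ implies $x=y$. *)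

From Stdlib Require Import Reals Lra List Classical ClassicalDescription.
From Stdlib Require Import Rtopology.
Open Scope R_scope.
Set Implicit Arguments.

Section Trees.
Variable T : Type.
Variable le : T -> T -> Prop.

Definition lt (s t : T) : Prop := le s t /\ s <> t.

Definition well_ordered_below (t : T) : Prop :=
  forall A : T -> Prop, (forall x, A x -> le x t) -> (exists x, A x) ->
    exists m, A m /\ forall x, A x -> le m x.

(* r(t), the order type of (0,t), is a limit ordinal:
   (0,t) is nonempty and has no largest element *)
Definition limit_height (t : T) : Prop :=
  (exists s, lt s t) /\ ~ (exists m, lt m t /\ forall s, lt s t -> le s m).

Definition is_tree : Prop :=
  (forall x, le x x) /\
  (forall x y, le x y -> le y x -> x = y) /\
  (forall x y z, le x y -> le y z -> le x z) /\
  (forall t, well_ordered_below t).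

Definition hausdorff_tree : Prop :=
  forall t t', limit_height t -> (forall s, lt s t <-> lt s t') -> t = t'.

(* immediate successors: u ∈ t^+  iff (0,u) = (0,t] *)
Definition succ (t u : T) : Prop := forall x, lt x u <-> le x t.

(* The topology: coarsest one in which every (0,t] is open and closed.
   Subbasic sets are (0,t] (flag true) and its complement (flag false);
   a point satisfies a finite list of subbasic conditions if it lies in the
   corresponding finite intersection. *)
Definition sat (x : T) (p : T * bool) : Prop :=
  if snd p then le x (fst p) else ~ le x (fst p).

Definition topen (U : T -> Prop) : Prop :=
  forall x, U x -> exists l : list (T * bool),
    Forall (sat x) l /\ forall y, Forall (sat y) l -> U y.

Definition tcompact (K : T -> Prop) : Prop :=
  forall (I : Type) (U : I -> T -> Prop),
    (forall i, topen (U i)) -> (forall x, K x -> exists i, U i x) ->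
    exists l : list I, forall x, K x -> exists i, In i l /\ U i x.

Definition tcontinuous (f : T -> R) : Prop :=
  forall V : R -> Prop, open_set V -> topen (fun x => V (f x)).

Definition C0 (f : T -> R) : Prop :=
  tcontinuous f /\ forall eps, 0 < eps -> tcompact (fun x => Rabs (f x) >= eps).

Definition is_norm_C0 (N : (T -> R) -> R) : Prop :=
  (forall f, C0 f -> 0 <= N f) /\
  (forall f, C0 f -> N f = 0 -> forall x, f x = 0) /\
  (forall c f, C0 f -> N (fun x => c * f x) = Rabs c * N f) /\
  (forall f g, C0 f -> C0 g -> N (fun x => f x + g x) <= N f + N g).

Definition equiv_sup_norm (N : (T -> R) -> R) : Prop :=
  exists a b, 0 < a /\ 0 < b /\ forall f, C0 f ->
    (forall t, a * Rabs (f t) <= N f) /\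
    (forall M, (forall t, Rabs (f t) <= M) -> N f <= b * M).

Definition strictly_convex (N : (T -> R) -> R) : Prop :=
  forall f g, C0 f -> C0 g -> N f = N g -> N f = / 2 * N (fun x => f x + g x) ->
    forall x, f x = g x.

Definition ind (t : T) : T -> R :=
  fun x => if excluded_middle_informative (le x t) then 1 else 0.

Definition is_inf (E : R -> Prop) (m : R) : Prop :=
  (forall r, E r -> m <= r) /\ (forall m', (forall r, E r -> m' <= r) -> m' <= m).

Definition mu_set (N : (T -> R) -> R) (t : T) : R -> Prop :=
  fun r => exists g, C0 g /\ (forall x, g x <> 0 -> lt t x) /\
                     r = N (fun x => ind t x + g x).

(* t is good for rho: there is a finite F ⊆ t^+ with
   inf_{u ∈ t^+ \ F} rho u > rho t  (inf ∅ = +∞), i.e. some c > rho t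
   bounds rho from below on t^+ \ F *)
Definition good (rho : T -> R) (t : T) : Prop :=
  exists F : list T, Forall (succ t) F /\
    exists c, rho t < c /\ forall u, succ t u -> ~ In u F -> c <= rho u.

Definition bad (rho : T -> R) (t : T) : Prop := ~ good rho t.

End Trees.

(** The proof rests on the formula [N (1_(0,t]) = mu t] for every point [t]
    that is bad for [mu].  The inequality [mu t <= N (1_(0,t])] is trivial.
    Conversely, if [mu t < m < N (1_(0,t])] and [t] is bad, then [t] has
    infinitely many immediate successors [u] with [mu u < m], hence functions
    [1_(0,u] + g_u] of norm [< m] with [g_u] supported above [u].  The sum [S]
    of [n] of them is [n 1_(0,t]] up to an error supported in the pairwise
    disjoint cones above the [u]'s.  If [a |f|_oo <= N f <= b |f|_oo], each
    summand of the error is bounded by [m / a] in the supremum norm, so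
    [n N (1_(0,t]) <= N S + b m / a <= n m + b m / a], which is impossible
    for large [n].

    Now let [s <= t1, t2] with [t1, t2] bad and [mu t1 = mu t2 = mu s].  Then
    [1_(0,t1]] and [1_(0,t2]] have norm [mu s], while their midpoint is
    [1_(0,s]] plus a function supported above [s], so it has norm [>= mu s].
    Strict convexity forces [1_(0,t1] = 1_(0,t2]], i.e. [t1 = t2]. *)

From Stdlib Require Import Reals Lra List Classical ClassicalDescription
  Rtopology FunctionalExtensionality.
From Stdlib Require ClassicalEpsilon.
Open Scope R_scope.

Section ListSums.

Context {I : Type}.

Definition lsum (F : I -> R) (l : list I) : R := fold_right (fun i s => F i + s) 0 l.

Lemma lsum_const_sub c F l : lsum (fun i => c - F i) l = INR (length l) * c - lsum F l.
Proof.
  induction l as [|i l IH]; [unfold lsum; simpl; ring|].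
  change (c - F i + lsum (fun i => c - F i) l = INR (S (length l)) * c - (F i + lsum F l)).
  rewrite IH, S_INR. ring.
Qed.

Lemma lsum_eq0 F l : (forall i, In i l -> F i = 0) -> lsum F l = 0.
Proof.
  induction l as [|i l IH]; intros H0; [reflexivity|].
  change (F i + lsum F l = 0).
  rewrite H0, IH; [ring | intros j Hj; apply H0; right; exact Hj | left; reflexivity].
Qed.

Lemma Rabs_lsum_disjoint F l B :
  0 <= B -> NoDup l -> (forall i, In i l -> Rabs (F i) <= B) ->
  (forall i j, In i l -> In j l -> F i <> 0 -> F j <> 0 -> i = j) ->
  Rabs (lsum F l) <= B.
Proof.
  intros HB. induction l as [|i l IH]; intros Hnd Hbd Hdisj.
  - unfold lsum; simpl. rewrite Rabs_R0; exact HB.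
  - inversion Hnd as [|? ? Hi Hnd']; subst.
    change (Rabs (F i + lsum F l) <= B).
    destruct (Req_dec (F i) 0) as [Hi0|Hi0].
    + rewrite Hi0, Rplus_0_l. apply IH; [exact Hnd'| |].
      * intros j Hj; apply Hbd; right; exact Hj.
      * intros j j' Hj Hj'; apply Hdisj; right; assumption.
    + rewrite lsum_eq0, Rplus_0_r; [apply Hbd; left; reflexivity|].
      intros j Hj. apply NNPP; intros Hj0. apply Hi.
      rewrite (Hdisj i j); [exact Hj | left; reflexivity | right; exact Hj | exact Hi0 | exact Hj0].
Qed.

End ListSums.

Definition pointwise_continuous {T} (le : T -> T -> Prop) (f : T -> R) : Prop :=
  forall x eps, 0 < eps -> exists l : list (T * bool),
    Forall (sat le x) l /\ forall y, Forall (sat le y) l -> Rabs (f y - f x) < eps.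

Section Topology.

Context {T : Type} {le : T -> T -> Prop}.

Lemma tcontinuous_pointwise f : tcontinuous le f <-> pointwise_continuous le f.
Proof.
  split.
  - intros Hf x eps Heps.
    destruct (Hf (disc (f x) (mkposreal eps Heps)) (disc_P1 _ _) x) as [l [Hx Hl]].
    { unfold disc; simpl. rewrite Rminus_diag, Rabs_R0; exact Heps. }
    exists l; split; [exact Hx | exact Hl].
  - intros Hf V HV x Hx.
    destruct (HV _ Hx) as [d Hd].
    destruct (Hf x d (cond_pos d)) as [l [Hxl Hl]].
    exists l; split; [exact Hxl|].
    intros y Hy. apply Hd. exact (Hl y Hy).
Qed.

Lemma topen_Rabs_lt f eps : pointwise_continuous le f -> topen le (fun x => Rabs (f x) < eps).
Proof.
  intros Hf x Hx.
  destruct (Hf x (eps - Rabs (f x))) as [l [Hxl Hl]]; [lra|].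
  exists l; split; [exact Hxl|].
  intros y Hy. specialize (Hl y Hy).
  pose proof (Rabs_triang_inv (f y) (f x)). lra.
Qed.

Lemma tcompact_union {K1 K2} :
  tcompact le K1 -> tcompact le K2 -> tcompact le (fun x => K1 x \/ K2 x).
Proof.
  intros HK1 HK2 I U HU Hcov.
  destruct (HK1 I U HU (fun x Kx => Hcov x (or_introl Kx))) as [l1 Hl1].
  destruct (HK2 I U HU (fun x Kx => Hcov x (or_intror Kx))) as [l2 Hl2].
  exists (l1 ++ l2). intros x [Kx|Kx].
  - destruct (Hl1 x Kx) as [i [Hi Ui]]. exists i; split; [apply in_or_app; auto | exact Ui].
  - destruct (Hl2 x Kx) as [i [Hi Ui]]. exists i; split; [apply in_or_app; auto | exact Ui].
Qed.

Lemma tcompact_closed_subset {K K'} :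
  tcompact le K' -> (forall x, K x -> K' x) -> topen le (fun x => ~ K x) -> tcompact le K.
Proof.
  intros HK' Hsub Hclosed I U HU Hcov.
  set (U' := fun (o : option I) x => match o with Some i => U i x | None => ~ K x end).
  assert (HU' : forall o, topen le (U' o)) by (intros [i|]; [apply HU | exact Hclosed]).
  assert (Hcov' : forall x, K' x -> exists o, U' o x).
  { intros x _. destruct (classic (K x)) as [Kx|Kx].
    - destruct (Hcov x Kx) as [i Hi]. exists (Some i); exact Hi.
    - exists None; exact Kx. }
  destruct (HK' _ U' HU' Hcov') as [l Hl].
  exists (flat_map (fun o => match o with Some i => i :: nil | None => nil end) l).
  intros x Kx. destruct (Hl x (Hsub x Kx)) as [[i|] [Hi Ui]].
  - exists i; split; [apply in_flat_map; exists (Some i); simpl; auto | exact Ui].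
  - contradiction.
Qed.

Lemma C0_intro f :
  pointwise_continuous le f ->
  (forall eps, 0 < eps -> exists K, tcompact le K /\ forall x, Rabs (f x) >= eps -> K x) ->
  C0 le f.
Proof.
  intros Hf Hlev. split; [apply tcontinuous_pointwise; exact Hf|].
  intros eps Heps. destruct (Hlev eps Heps) as [K [HK Hsub]].
  apply (tcompact_closed_subset HK Hsub).
  pose proof (topen_Rabs_lt f eps Hf) as Hopen.
  intros x Hx. destruct (Hopen x) as [l [Hxl Hl]]; [lra|].
  exists l; split; [exact Hxl|]. intros y Hy. specialize (Hl y Hy). lra.
Qed.

Lemma C0_zero : C0 le (fun _ => 0).
Proof.
  apply C0_intro.
  - intros x eps Heps. exists nil; split; [constructor|].
    intros y _. rewrite Rminus_diag, Rabs_R0; exact Heps.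
  - intros eps Heps. exists (fun _ => False); split.
    + intros I U _ _. exists nil. intros x [].
    + intros x Hx. rewrite Rabs_R0 in Hx. lra.
Qed.

Lemma C0_plus {f g} : C0 le f -> C0 le g -> C0 le (fun x => f x + g x).
Proof.
  intros [Cf Kf] [Cg Kg].
  rewrite tcontinuous_pointwise in Cf, Cg.
  apply C0_intro.
  - intros x eps Heps.
    destruct (Cf x (eps / 2)) as [l1 [Hx1 Hl1]]; [lra|].
    destruct (Cg x (eps / 2)) as [l2 [Hx2 Hl2]]; [lra|].
    exists (l1 ++ l2); split; [apply Forall_app; auto|].
    intros y Hy. apply Forall_app in Hy. destruct Hy as [Hy1 Hy2].
    specialize (Hl1 y Hy1). specialize (Hl2 y Hy2).
    replace (f y + g y - (f x + g x)) with ((f y - f x) + (g y - g x)) by ring.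
    pose proof (Rabs_triang (f y - f x) (g y - g x)). lra.
  - intros eps Heps.
    exists (fun x => Rabs (f x) >= eps / 2 \/ Rabs (g x) >= eps / 2); split.
    + apply tcompact_union; [apply Kf | apply Kg]; lra.
    + intros x Hx. pose proof (Rabs_triang (f x) (g x)).
      destruct (Rle_lt_dec (eps / 2) (Rabs (f x))); [left; lra | right; lra].
Qed.

Lemma C0_scal c {f} : C0 le f -> C0 le (fun x => c * f x).
Proof.
  intros [Cf Kf]. rewrite tcontinuous_pointwise in Cf.
  pose proof (Rabs_pos c) as Hc.
  assert (Hdelta : forall eps, eps / (Rabs c + 1) * (Rabs c + 1) = eps) by (intros; field; lra).
  apply C0_intro.
  - intros x eps Heps.
    assert (Hd : 0 < eps / (Rabs c + 1)) by (apply Rdiv_lt_0_compat; lra).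
    destruct (Cf x _ Hd) as [l [Hxl Hl]].
    exists l; split; [exact Hxl|]. intros y Hy. specialize (Hl y Hy).
    replace (c * f y - c * f x) with (c * (f y - f x)) by ring.
    rewrite Rabs_mult. specialize (Hdelta eps).
    pose proof (Rabs_pos (f y - f x)). nra.
  - intros eps Heps.
    exists (fun x => Rabs (f x) >= eps / (Rabs c + 1)); split.
    + apply Kf, Rdiv_lt_0_compat; lra.
    + intros x Hx. rewrite Rabs_mult in Hx. specialize (Hdelta eps).
      pose proof (Rabs_pos (f x)). apply Rle_ge. nra.
Qed.

Lemma C0_minus {f g} : C0 le f -> C0 le g -> C0 le (fun x => f x - g x).
Proof.
  intros Cf Cg.
  replace (fun x => f x - g x) with (fun x => f x + -1 * g x)
    by (extensionality x; ring).
  apply C0_plus; [exact Cf | apply C0_scal; exact Cg].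
Qed.

Lemma C0_lsum {I} (F : I -> T -> R) l :
  (forall i, In i l -> C0 le (F i)) -> C0 le (fun x => lsum (fun i => F i x) l).
Proof.
  induction l as [|i l IH]; intros HF; [apply C0_zero|].
  change (C0 le (fun x => F i x + lsum (fun j => F j x) l)).
  apply C0_plus; [apply HF; left; reflexivity | apply IH; intros j Hj; apply HF; right; exact Hj].
Qed.

End Topology.

Definition supported_above {T} (le : T -> T -> Prop) (t : T) (g : T -> R) : Prop :=
  forall x, g x <> 0 -> lt le t x.

Section TreeOrder.

Context {T : Type} {le : T -> T -> Prop}.
Hypothesis Htree : is_tree le.

Lemma tree_refl x : le x x.
Proof. apply Htree. Qed.

Lemma tree_antisym {x y} : le x y -> le y x -> x = y.
Proof. apply Htree. Qed.

Lemma tree_trans {x y z} : le x y -> le y z -> le x z.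
Proof. apply Htree. Qed.

Lemma lt_le_trans {x y z} : lt le x y -> le y z -> lt le x z.
Proof.
  intros [Hxy Hne] Hyz. split; [exact (tree_trans Hxy Hyz)|].
  intros ->. apply Hne, tree_antisym; assumption.
Qed.

Lemma tree_least t (A : T -> Prop) x0 :
  (forall x, A x -> le x t) -> A x0 -> exists m, A m /\ forall x, A x -> le m x.
Proof. intros Hb Hx0. apply (proj2 (proj2 (proj2 Htree)) t A Hb). exists x0; exact Hx0. Qed.

Lemma tree_comparable {x y t} : le x t -> le y t -> le x y \/ le y x.
Proof.
  intros Hx Hy.
  destruct (tree_least t (fun z => z = x \/ z = y) x) as [m [[->| ->] Hm]]; auto.
  - intros z [->| ->]; assumption.
Qed.

(* [m] is the point where the branch of [x0] leaves [(0,q]]. *)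
Lemma branching_point {x0 q} :
  ~ le x0 q -> exists m, le m x0 /\ ~ le m q /\ forall y, le y x0 -> (le y q <-> lt le y m).
Proof.
  intros Hx0q.
  destruct (tree_least x0 (fun y => le y x0 /\ ~ le y q) x0) as [m [[Hmx0 Hmq] Hm]].
  { intros y [Hy _]; exact Hy. } { split; [apply tree_refl | exact Hx0q]. }
  exists m; split; [exact Hmx0|]; split; [exact Hmq|].
  intros y Hy; split.
  - intros Hyq. destruct (tree_comparable Hy Hmx0) as [Hym|Hmy].
    + split; [exact Hym|]. intros ->; contradiction.
    + exfalso. exact (Hmq (tree_trans Hmy Hyq)).
  - intros [Hym Hne]. apply NNPP; intros Hyq.
    exact (Hne (tree_antisym Hym (Hm y (conj Hy Hyq)))).
Qed.

Definition contains_tail x0 (S : T -> Prop) : Prop :=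
  (forall y, le y x0 -> S y) \/
  exists z, lt le z x0 /\ forall y, le y x0 -> ~ le y z -> S y.

Lemma contains_tail_and {x0 S1 S2} :
  contains_tail x0 S1 -> contains_tail x0 S2 -> contains_tail x0 (fun y => S1 y /\ S2 y).
Proof.
  intros [H1|[z1 [Hz1 H1]]] [H2|[z2 [Hz2 H2]]].
  - left; auto.
  - right; exists z2; auto.
  - right; exists z1; auto.
  - destruct (tree_comparable (proj1 Hz1) (proj1 Hz2)) as [Hz|Hz].
    + right; exists z2; split; [exact Hz2|]. intros y Hy Hyz; split; auto.
      apply H1; [exact Hy|]. intros Hyz1. exact (Hyz (tree_trans Hyz1 Hz)).
    + right; exists z1; split; [exact Hz1|]. intros y Hy Hyz; split; auto.
      apply H2; [exact Hy|]. intros Hyz2. exact (Hyz (tree_trans Hyz2 Hz)).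
Qed.

Hypothesis Hhaus : hausdorff_tree le.

(* If the branch of [x0] leaves [(0,q]] at a limit point [m], then so does the
   branch of [q] at a point [m'] with [(0,m) = (0,m')]; Hausdorffness gives [m = m']. *)
Lemma contains_tail_not_le {x0 q} : ~ le x0 q -> contains_tail x0 (fun y => ~ le y q).
Proof.
  intros Hx0q. destruct (branching_point Hx0q) as [m [Hmx0 [Hmq Hm]]].
  destruct (classic (exists s, lt le s m)) as [Hne|Hempty].
  2:{ left. intros y Hy Hyq. apply Hempty. exists y. apply Hm; assumption. }
  destruct (classic (exists z, lt le z m /\ forall s, lt le s m -> le s z))
    as [[z [Hzm Hz]]|Hlim].
  - right. exists z; split; [exact (lt_le_trans Hzm Hmx0)|].
    intros y Hy Hyz Hyq. apply Hyz, Hz, Hm; assumption.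
  - exfalso.
    destruct (classic (le q x0)) as [Hqx0|Hqx0].
    { apply Hlim. exists q; split; [apply Hm; [exact Hqx0 | apply tree_refl]|].
      intros s Hs. apply (Hm s (tree_trans (proj1 Hs) Hmx0)); exact Hs. }
    destruct (branching_point Hqx0) as [m' [Hm'q [Hm'x0 Hm']]].
    assert (Hmm' : m = m').
    { apply Hhaus; [split; assumption|].
      intros s; split.
      - intros Hs. assert (Hsx0 : le s x0) by exact (tree_trans (proj1 Hs) Hmx0).
        apply Hm'; [apply Hm|]; assumption.
      - intros Hs. assert (Hsq : le s q) by exact (tree_trans (proj1 Hs) Hm'q).
        apply Hm; [apply Hm'|]; assumption. }
    subst m'. exact (Hmq Hm'q).
Qed.

Lemma contains_tail_sat {x0 l} :
  Forall (sat le x0) l -> contains_tail x0 (fun y => Forall (sat le y) l).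
Proof.
  induction l as [|[q b] l IH]; intros Hl.
  - left; constructor.
  - inversion Hl as [|? ? Hp Hl']; subst.
    assert (Hq : contains_tail x0 (fun y => sat le y (q, b))).
    { destruct b; unfold sat in *; simpl in *.
      - left. intros y Hy. exact (tree_trans Hy Hp).
      - exact (contains_tail_not_le Hp). }
    destruct (contains_tail_and Hq (IH Hl')) as [H|[z [Hz H]]].
    + left. intros y Hy. destruct (H y Hy). constructor; assumption.
    + right. exists z; split; [exact Hz|].
      intros y Hy Hyz. destruct (H y Hy Hyz). constructor; assumption.
Qed.

(* Transfinite induction along [(0,t]]: a neighbourhood of the least uncovered
   point [x0] contains a final segment of [(0,x0]], and the rest is covered. *)
Lemma tcompact_below t : tcompact le (fun x => le x t).
Proof.
  intros I U HU Hcov.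
  set (P := fun x => exists l : list I, forall y, le y x -> exists i, In i l /\ U i y).
  apply NNPP; intros HnP.
  destruct (tree_least t (fun x => le x t /\ ~ P x) t) as [x0 [[Hx0t Hx0] Hmin]].
  { intros x [Hx _]; exact Hx. } { split; [apply tree_refl | exact HnP]. }
  assert (Hbelow : forall y, lt le y x0 -> P y).
  { intros y [Hy Hne]. apply NNPP; intros HPy.
    exact (Hne (tree_antisym Hy (Hmin y (conj (tree_trans Hy Hx0t) HPy)))). }
  destruct (Hcov x0 Hx0t) as [i Hi].
  destruct (HU i x0 Hi) as [l0 [Hx0l0 Hl0]].
  apply Hx0. destruct (contains_tail_sat Hx0l0) as [Hall|[z [Hz Htail]]].
  - exists (i :: nil). intros y Hy. exists i; split; [left; reflexivity | apply Hl0, Hall, Hy].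
  - destruct (Hbelow z Hz) as [lz Hlz]. exists (i :: lz). intros y Hy.
    destruct (classic (le y z)) as [Hyz|Hyz].
    + destruct (Hlz y Hyz) as [j [Hj Uj]]. exists j; split; [right; exact Hj | exact Uj].
    + exists i; split; [left; reflexivity | apply Hl0, Htail; assumption].
Qed.

Lemma ind_in t x : le x t -> ind le t x = 1.
Proof.
  intros Hx. unfold ind.
  destruct (excluded_middle_informative (le x t)); [reflexivity | contradiction].
Qed.

Lemma ind_out t x : ~ le x t -> ind le t x = 0.
Proof.
  intros Hx. unfold ind.
  destruct (excluded_middle_informative (le x t)); [contradiction | reflexivity].
Qed.

Lemma ind_C0 t : C0 le (ind le t).
Proof.
  apply C0_intro.
  - intros x eps Heps.
    destruct (classic (le x t)) as [Hx|Hx].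
    + exists ((t, true) :: nil). split; [constructor; [exact Hx | constructor]|].
      intros y Hy. inversion Hy; subst.
      rewrite ind_in, ind_in by assumption. rewrite Rminus_diag, Rabs_R0; exact Heps.
    + exists ((t, false) :: nil). split; [constructor; [exact Hx | constructor]|].
      intros y Hy. inversion Hy; subst.
      rewrite ind_out, ind_out by assumption. rewrite Rminus_diag, Rabs_R0; exact Heps.
  - intros eps Heps. exists (fun x => le x t); split; [apply tcompact_below|].
    intros x Hx. apply NNPP; intros Hxt. rewrite ind_out, Rabs_R0 in Hx by exact Hxt. lra.
Qed.

Lemma ind_inj t1 t2 : (forall x, ind le t1 x = ind le t2 x) -> t1 = t2.
Proof.
  intros H. apply tree_antisym; apply NNPP; intros Hn.
  - specialize (H t1). rewrite (ind_in t1 t1 (tree_refl t1)), (ind_out t2 t1 Hn) in H. lra.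
  - specialize (H t2). rewrite (ind_out t1 t2 Hn), (ind_in t2 t2 (tree_refl t2)) in H. lra.
Qed.

Lemma supported_above_zero t : supported_above le t (fun _ => 0).
Proof. intros x Hx. contradiction Hx. reflexivity. Qed.

Lemma supported_above_plus t f g :
  supported_above le t f -> supported_above le t g -> supported_above le t (fun x => f x + g x).
Proof.
  intros Hf Hg x Hx. destruct (Req_dec (f x) 0) as [Hf0|Hf0].
  - apply Hg. rewrite Hf0, Rplus_0_l in Hx. exact Hx.
  - exact (Hf x Hf0).
Qed.

Lemma supported_above_scal t c g : supported_above le t g -> supported_above le t (fun x => c * g x).
Proof. intros Hg x Hx. apply Hg. intros Hg0. apply Hx. rewrite Hg0. ring. Qed.

Lemma supported_above_le {s t g} : le s t -> supported_above le t g -> supported_above le s g.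
Proof.
  intros Hst Hg x Hx. destruct (Hg x Hx) as [Htx Hne]. split; [exact (tree_trans Hst Htx)|].
  intros <-. exact (Hne (tree_antisym Htx Hst)).
Qed.

Lemma supported_above_ind_sub s t :
  le s t -> supported_above le s (fun x => ind le t x - ind le s x).
Proof.
  intros Hst x Hx. destruct (classic (le x s)) as [Hxs|Hxs].
  - rewrite (ind_in t x (tree_trans Hxs Hst)), (ind_in s x Hxs) in Hx. lra.
  - destruct (classic (le x t)) as [Hxt|Hxt].
    + destruct (tree_comparable Hst Hxt) as [Hsx|Hxs']; [|contradiction].
      split; [exact Hsx|]. intros <-. exact (Hxs (tree_refl s)).
    + rewrite (ind_out t x Hxt), (ind_out s x Hxs) in Hx. lra.
Qed.

Lemma succ_lt {t u} : succ le t u -> lt le t u.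
Proof. intros Hu. apply Hu, tree_refl. Qed.

Lemma succ_cone_unique {t u u' x} :
  succ le t u -> succ le t u' -> le u x -> le u' x -> u = u'.
Proof.
  intros Hu Hu' Hux Hu'x. apply NNPP; intros Hne.
  destruct (tree_comparable Hux Hu'x) as [Huu'|Hu'u].
  - destruct (succ_lt Hu) as [Htu Hne'].
    exact (Hne' (tree_antisym Htu (proj1 (Hu' u) (conj Huu' Hne)))).
  - destruct (succ_lt Hu') as [Htu' Hne'].
    exact (Hne' (tree_antisym Htu' (proj1 (Hu u') (conj Hu'u (not_eq_sym Hne))))).
Qed.

Lemma succ_ind_sub_cases {t u g x} :
  succ le t u -> supported_above le u g ->
  ind le t x - (ind le u x + g x) = 0 \/ (le u x /\ ind le t x = 0).
Proof.
  intros Hu Hg. destruct (succ_lt Hu) as [Htu Hne].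
  destruct (classic (le u x)) as [Hux|Hux].
  - right; split; [exact Hux|]. apply ind_out. intros Hxt.
    exact (Hne (tree_antisym Htu (tree_trans Hux Hxt))).
  - left. assert (Hg0 : g x = 0) by (apply NNPP; intros H; exact (Hux (proj1 (Hg x H)))).
    rewrite Hg0. destruct (classic (le x t)) as [Hxt|Hxt].
    + rewrite (ind_in t x Hxt), (ind_in u x (tree_trans Hxt Htu)). ring.
    + assert (Hxu : ~ le x u).
      { intros Hxu. apply Hxt, Hu. split; [exact Hxu|]. intros ->. exact (Hux (tree_refl u)). }
      rewrite (ind_out t x Hxt), (ind_out u x Hxu). ring.
Qed.

Lemma bad_successors {rho t} m :
  bad le rho t -> rho t < m ->
  forall n, exists l, length l = n /\ NoDup l /\ Forall (fun u => succ le t u /\ rho u < m) l.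
Proof.
  intros Hbad Hm n. induction n as [|n [l [Hlen [Hnd Hl]]]].
  - exists nil. split; [reflexivity | split; constructor].
  - assert (Hu : exists u, succ le t u /\ ~ In u l /\ rho u < m).
    { apply NNPP; intros Hno. apply Hbad. exists l. split.
      - apply (Forall_impl _ (fun u (Hu : succ le t u /\ rho u < m) => proj1 Hu) Hl).
      - exists m; split; [exact Hm|]. intros u Hsu Hnin.
        apply Rnot_lt_le; intros Hlt. apply Hno. exists u; auto. }
    destruct Hu as [u [Hsu [Hnin Hu]]].
    exists (u :: l). split; [simpl; rewrite Hlen; reflexivity|].
    split; [constructor; assumption | constructor; auto].
Qed.

End TreeOrder.

Section NormOnTree.

Context {T : Type} {le : T -> T -> Prop}.
Hypotheses (Htree : is_tree le) (Hhaus : hausdorff_tree le).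
Context {N : (T -> R) -> R}.
Hypothesis Hnorm : is_norm_C0 le N.

Lemma norm_zero : N (fun _ => 0) = 0.
Proof.
  destruct Hnorm as (_ & _ & Hhom & _).
  transitivity (N (fun x => 0 * (fun _ : T => 0) x)); [f_equal; extensionality x; ring|].
  rewrite (Hhom 0 _ C0_zero), Rabs_R0. ring.
Qed.

Lemma norm_lsum_le {I} (F : I -> T -> R) {l m} :
  (forall i, In i l -> C0 le (F i) /\ N (F i) <= m) ->
  N (fun x => lsum (fun i => F i x) l) <= INR (length l) * m.
Proof.
  destruct Hnorm as (_ & _ & _ & Htri).
  induction l as [|i l IH]; intros HF.
  - change (N (fun _ => 0) <= 0 * m). rewrite norm_zero. lra.
  - change (N (fun x => F i x + lsum (fun j => F j x) l) <= INR (S (length l)) * m).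
    assert (HFl : forall j, In j l -> C0 le (F j) /\ N (F j) <= m)
      by (intros j Hj; apply HF; right; exact Hj).
    destruct (HF i (or_introl eq_refl)) as [CFi NFi].
    eapply Rle_trans; [apply Htri; [exact CFi | apply C0_lsum; intros j Hj; apply HFl, Hj]|].
    rewrite S_INR. specialize (IH HFl). lra.
Qed.

Definition approximant (m : R) (u : T) (g : T -> R) : Prop :=
  C0 le g /\ supported_above le u g /\ N (fun x => ind le u x + g x) < m.

(* The error [1_(0,t] - (1_(0,u] + g_u)] lives on the cone above [u], where it is
   bounded by [m / a]; the cones of distinct successors of [t] are disjoint. *)
Lemma successor_sum_error_bound {a} (Ha : 0 < a)
  (Hlow : forall f, C0 le f -> forall x, a * Rabs (f x) <= N f)
  {t m G l} x :
  0 <= m -> NoDup l -> (forall u, In u l -> succ le t u /\ approximant m u (G u)) ->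
  Rabs (lsum (fun u => ind le t x - (ind le u x + G u x)) l) <= m / a.
Proof.
  intros Hm Hnd Hl.
  assert (Hma : 0 <= m / a) by (unfold Rdiv; apply Rmult_le_pos; [lra | left; apply Rinv_0_lt_compat; lra]).
  assert (Ham : a * (m / a) = m) by (field; lra).
  assert (Hcases : forall u, In u l -> ind le t x - (ind le u x + G u x) = 0 \/
                                     (le u x /\ ind le t x = 0)).
  { intros u Hu. destruct (Hl u Hu) as [Hsu [_ [Hsupp _]]].
    exact (succ_ind_sub_cases Htree Hsu Hsupp). }
  apply Rabs_lsum_disjoint; [exact Hma | exact Hnd | |].
  - intros u Hu. destruct (Hcases u Hu) as [H0|[_ Ht0]].
    + rewrite H0, Rabs_R0. exact Hma.
    + destruct (Hl u Hu) as [_ [CG [_ NG]]].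
      rewrite Ht0, Rminus_0_l, Rabs_Ropp.
      pose proof (Hlow _ (C0_plus (ind_C0 Htree Hhaus u) CG) x) as Hbound.
      apply (Rmult_le_reg_l a); [exact Ha|]. rewrite Ham. lra.
  - intros u u' Hu Hu' H H'.
    destruct (Hcases u Hu) as [H0|[Hux _]]; [contradiction|].
    destruct (Hcases u' Hu') as [H0'|[Hu'x _]]; [contradiction|].
    exact (succ_cone_unique Htree (proj1 (Hl u Hu)) (proj1 (Hl u' Hu')) Hux Hu'x).
Qed.

(* Averaging [n] approximants above distinct successors of [t] reproduces
   [n 1_(0,t]] up to an error of supremum norm [<= m / a]. *)
Lemma successor_average_bound {a b} (Ha : 0 < a)
  (Hlow : forall f, C0 le f -> forall x, a * Rabs (f x) <= N f)
  (Hup : forall f, C0 le f -> forall M, (forall x, Rabs (f x) <= M) -> N f <= b * M)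
  {t m G l} :
  0 <= m -> NoDup l -> (forall u, In u l -> succ le t u /\ approximant m u (G u)) ->
  INR (length l) * N (ind le t) <= INR (length l) * m + b * (m / a).
Proof.
  intros Hm Hnd Hl. destruct Hnorm as (_ & _ & Hhom & Htri).
  set (S := fun x => lsum (fun u => ind le u x + G u x) l).
  set (E := fun x => lsum (fun u => ind le t x - (ind le u x + G u x)) l).
  assert (HS : C0 le S /\ N S <= INR (length l) * m).
  { assert (HF : forall u, In u l -> C0 le (fun x => ind le u x + G u x) /\
                                    N (fun x => ind le u x + G u x) <= m).
    { intros u Hu. destruct (Hl u Hu) as [_ [CG [_ NG]]].
      split; [apply C0_plus; [apply ind_C0 | exact CG]; assumption | lra]. }
    split; [apply (C0_lsum (fun u x => ind le u x + G u x)); intros u Hu; apply HF, Hu|].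
    exact (norm_lsum_le (fun u x => ind le u x + G u x) HF). }
  assert (HE : C0 le E /\ N E <= b * (m / a)).
  { assert (CE : C0 le E).
    { apply (C0_lsum (fun u x => ind le t x - (ind le u x + G u x))). intros u Hu.
      destruct (Hl u Hu) as [_ [CG _]].
      apply C0_minus; [|apply C0_plus; [|exact CG]]; apply ind_C0; assumption. }
    split; [exact CE|]. apply (Hup E CE). intros x.
    exact (successor_sum_error_bound Ha Hlow x Hm Hnd Hl). }
  assert (Hsum : (fun x => INR (length l) * ind le t x) = (fun x => S x + E x)).
  { extensionality x. unfold S, E. rewrite lsum_const_sub. ring. }
  pose proof (Hhom (INR (length l)) (ind le t) (ind_C0 Htree Hhaus t)) as Hscale.
  rewrite Hsum, Rabs_right in Hscale by (apply Rle_ge, pos_INR).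
  pose proof (Htri S E (proj1 HS) (proj1 HE)). lra.
Qed.

Context {mu : T -> R}.
Hypothesis Hmu : forall t, is_inf (mu_set le N t) (mu t).

Lemma mu_le_norm t g : C0 le g -> supported_above le t g -> mu t <= N (fun x => ind le t x + g x).
Proof. intros Cg Sg. apply (proj1 (Hmu t)). exists g. auto. Qed.

Lemma mu_nonneg t : 0 <= mu t.
Proof.
  apply (proj2 (Hmu t)). intros r [g [Cg [_ ->]]].
  apply (proj1 Hnorm), C0_plus; [apply ind_C0; assumption | exact Cg].
Qed.

Lemma mu_monotone {s t} : le s t -> mu s <= mu t.
Proof.
  intros Hst. apply (proj2 (Hmu t)). intros r [g [Cg [Sg ->]]].
  replace (fun x => ind le t x + g x)
    with (fun x => ind le s x + ((ind le t x - ind le s x) + g x)) by (extensionality x; ring).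
  apply mu_le_norm.
  - apply C0_plus; [apply C0_minus; apply ind_C0; assumption | exact Cg].
  - apply supported_above_plus;
      [apply supported_above_ind_sub; assumption | exact (supported_above_le Htree Hst Sg)].
Qed.

Lemma choose_approximants m :
  exists G : T -> T -> R, forall u, mu u < m -> approximant m u (G u).
Proof.
  exists (fun u => ClassicalEpsilon.epsilon (inhabits (fun _ : T => 0)) (approximant m u)).
  intros u Hu. apply ClassicalEpsilon.epsilon_spec.
  apply NNPP; intros Hno. enough (m <= mu u) by lra.
  apply (proj2 (Hmu u)). intros r [g [Cg [Sg ->]]].
  apply Rnot_lt_le; intros Hlt. apply Hno. exists g. split; [exact Cg | split; assumption].
Qed.

Hypothesis Hequiv : equiv_sup_norm le N.

Lemma norm_ind_le_mu_of_bad {t} : bad le mu t -> N (ind le t) <= mu t.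
Proof.
  intros Hbad. destruct Hequiv as (a & b & Ha & _ & Hab).
  apply Rnot_lt_le; intros Hlt.
  set (d := N (ind le t) - mu t). set (m := mu t + d / 2).
  assert (Hd : 0 < d) by (unfold d; lra).
  assert (Hm : 0 <= m) by (pose proof (mu_nonneg t); unfold m; lra).
  destruct (INR_unbounded (b * (m / a) / (d / 2))) as [n Hn].
  assert (Hnd : b * (m / a) < INR n * (d / 2)).
  { replace (b * (m / a)) with (b * (m / a) / (d / 2) * (d / 2)) by (field; lra).
    apply Rmult_lt_compat_r; lra. }
  destruct (choose_approximants m) as [G HG].
  destruct (bad_successors m Hbad ltac:(unfold m; lra) n) as (l & <- & Hnodup & Hl).
  rewrite Forall_forall in Hl.
  assert (Hbound := successor_average_bound Ha (fun f Cf => proj1 (Hab f Cf))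
                      (fun f Cf => proj2 (Hab f Cf)) Hm Hnodup
                      (fun u Hu => conj (proj1 (Hl u Hu)) (HG u (proj2 (Hl u Hu))))).
  assert (Hexp : INR (length l) * N (ind le t) = INR (length l) * m + INR (length l) * (d / 2))
    by (unfold m, d; field).
  lra.
Qed.

Lemma norm_ind_bad {t} : bad le mu t -> N (ind le t) = mu t.
Proof.
  intros Hbad. apply Rle_antisym; [exact (norm_ind_le_mu_of_bad Hbad)|].
  replace (ind le t) with (fun x => ind le t x + 0) by (extensionality x; ring).
  apply mu_le_norm; [apply C0_zero | apply supported_above_zero].
Qed.

Hypothesis Hsc : strictly_convex le N.

Lemma bad_above_unique s t1 t2 :
  le s t1 -> le s t2 -> bad le mu t1 -> bad le mu t2 ->
  mu t1 = mu s -> mu t2 = mu s -> t1 = t2.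
Proof.
  intros H1 H2 B1 B2 E1 E2. destruct Hnorm as (_ & _ & Hhom & Htri).
  assert (C1 : C0 le (ind le t1)) by (apply ind_C0; assumption).
  assert (C2 : C0 le (ind le t2)) by (apply ind_C0; assumption).
  assert (Hmid : mu s <= / 2 * N (fun x => ind le t1 x + ind le t2 x)).
  { replace (/ 2 * N (fun x => ind le t1 x + ind le t2 x))
      with (N (fun x => ind le s x +
                        (/ 2 * (ind le t1 x - ind le s x) + / 2 * (ind le t2 x - ind le s x)))).
    - apply mu_le_norm.
      + apply C0_plus; apply C0_scal, C0_minus; try assumption; apply ind_C0; assumption.
      + apply supported_above_plus; apply supported_above_scal, supported_above_ind_sub;
          assumption.
    - transitivity (N (fun x => / 2 * (ind le t1 x + ind le t2 x))).
      + f_equal. extensionality x. field.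
      + rewrite Hhom, Rabs_right by (lra || apply C0_plus; assumption). reflexivity. }
  apply (ind_inj Htree). apply Hsc; [exact C1 | exact C2 | | ].
  - rewrite !norm_ind_bad by assumption. congruence.
  - rewrite norm_ind_bad, E1 by assumption. apply Rle_antisym; [exact Hmid|].
    pose proof (Htri _ _ C1 C2). rewrite !norm_ind_bad in * by assumption. lra.
Qed.

End NormOnTree.

Theorem proposition3p3 (T : Type) (le : T -> T -> Prop)
  (Htree : is_tree le) (Hhaus : hausdorff_tree le)
  (N : (T -> R) -> R)
  (Hnorm : is_norm_C0 le N) (Hequiv : equiv_sup_norm le N)
  (Hsc : strictly_convex le N)
  (mu : T -> R) (Hmu : forall t, is_inf (mu_set le N t) (mu t)) :
  (forall s t1 t2,
     le s t1 -> le s t2 -> bad le mu t1 -> bad le mu t2 ->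
     mu t1 = mu s -> mu t2 = mu s -> t1 = t2) /\
  (forall s t, bad le mu s -> bad le mu t -> lt le s t -> mu s < mu t).
Proof.
  pose proof (bad_above_unique Htree Hhaus Hnorm Hmu Hequiv Hsc) as Hunique.
  split; [exact Hunique|].
  intros s t Bs Bt [Hst Hne].
  destruct (Rle_lt_or_eq_dec _ _ (mu_monotone Htree Hhaus Hmu Hst)) as [Hlt|Heq]; [exact Hlt|].
  exfalso. apply Hne, (Hunique s s t); [apply (tree_refl Htree) | assumption.. | reflexivity | ].
  symmetry; exact Heq.
Qed.
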